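(* Let $\Sigma=\{a_1,\dots,a_n\}$ be an alphabet, let $\varphi:\Sigma^+\to\Sigma^+$ be a Parikh-positive morphism, and let $W=\{\varphi(a_i)\mid 1\leq i\leq n\}$. If $|W|<n$, then $\varphi$ is reducible.
   Context: A morphism $\varphi:\Sigma^+\to\Sigma^+$ satisfies $\varphi(uv)=\varphi(u)\varphi(v)$ (non-empty images); it is Parikh-positive if every letter of $\Sigma$ occurs in $\varphi(a_1)\cdots\varphi(a_n)$. An automorphism is an injective morphism mapping each letter to a single letter. $\varphi$ is reducible if $\varphi=\psi_2\circ\psi_1$ for morphisms $\psi_1,\psi_2:\Sigma^+\to\Sigma^+$ neither of which is an automorphism. *)

From mathcomp Require Import all_boot.
Set Implicit Arguments. Unset Strict Implicit. Unset Printing Implicit Defensive.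

(* Alphabet Sigma = {a_1,...,a_n} is represented by 'I_n; words are seq 'I_n.
   A morphism Sigma^+ -> Sigma^+ is determined by the images of the letters,
   which must be non-empty words. *)
Definition letter_images (n : nat) := 'I_n -> seq 'I_n.

Definition morph_apply n (f : letter_images n) (w : seq 'I_n) : seq 'I_n :=
  flatten (map f w).

Definition is_morphism n (f : letter_images n) : Prop :=
  forall a : 'I_n, f a <> [::].

Definition parikh_positive n (f : letter_images n) : Prop :=
  forall b : 'I_n, b \in morph_apply f (enum 'I_n).

Definition is_automorphism n (f : letter_images n) : Prop :=
  (forall a : 'I_n, size (f a) = 1) /\
  (forall u v : seq 'I_n, u <> [::] -> v <> [::] ->
     morph_apply f u = morph_apply f v -> u = v).

Definition reducible n (f : letter_images n) : Prop :=
  exists psi1 psi2 : letter_images n,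
    is_morphism psi1 /\ is_morphism psi2 /\
    ~ is_automorphism psi1 /\ ~ is_automorphism psi2 /\
    (forall w : seq 'I_n, w <> [::] ->
       morph_apply f w = morph_apply psi2 (morph_apply psi1 w)).

(* If two letters a <> b have the same image, let pi be the letter-to-letter
   morphism sending b to a and fixing every other letter.  Then
   phi = phi o pi, and neither factor is an automorphism: pi identifies a and
   b by construction, phi by assumption. *)

From mathcomp Require Import all_boot.

Set Implicit Arguments.
Unset Strict Implicit.
Unset Printing Implicit Defensive.

Lemma small_image_not_injective (T : finType) (U : eqType) (f : T -> U) :
  size (undup [seq f x | x <- enum T]) < #|T| -> ~~ injectiveb f.
Proof.
apply: contraTN => /injectiveP f_inj.
rewrite undup_id; first by rewrite size_map -cardE ltnn.
by rewrite map_inj_uniq // enum_uniq.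
Qed.

Section LetterMorphisms.

Variable n : nat.
Implicit Types (f : letter_images n) (h : 'I_n -> 'I_n) (w : seq 'I_n).

Definition letter_morph h : letter_images n := fun c => [:: h c].

Lemma letter_morph_morphism h : is_morphism (letter_morph h).
Proof. by []. Qed.

Lemma morph_apply_letter_morph f h w :
  morph_apply f (morph_apply (letter_morph h) w) = morph_apply (f \o h) w.
Proof. by rewrite /morph_apply flatten_map1 -map_comp. Qed.

Lemma eq_morph_apply f g : f =1 g -> morph_apply f =1 morph_apply g.
Proof. by move=> fg w; rewrite /morph_apply (eq_map fg). Qed.

Lemma collision_not_automorphism f a b :
  a != b -> f a = f b -> ~ is_automorphism f.
Proof.
move=> neq_ab fab [_ f_inj].
have [eq_ab] : [:: a] = [:: b] by apply: f_inj; rewrite // /morph_apply /= fab.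
by rewrite eq_ab eqxx in neq_ab.
Qed.

Definition merge_letter (b a : 'I_n) : 'I_n -> 'I_n :=
  fun c => if c == b then a else c.

Lemma merge_letter_collision (b a : 'I_n) :
  merge_letter b a a = merge_letter b a b.
Proof. by rewrite /merge_letter eqxx; case: eqP. Qed.

Lemma merge_letter_invariant f (b a : 'I_n) :
  f a = f b -> f \o merge_letter b a =1 f.
Proof. by move=> fab c /=; rewrite /merge_letter; case: eqP => [->|]. Qed.

End LetterMorphisms.

Theorem proposition3 (n : nat) (phi : letter_images n) :
  is_morphism phi -> parikh_positive phi ->
  size (undup [seq phi a | a <- enum 'I_n]) < n ->
  reducible phi.
Proof.
move=> phi_morph _ small_image.
have /injectivePn [a [b neq_ab phi_ab]] : ~~ injectiveb phi.
  by apply: small_image_not_injective; rewrite card_ord.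
exists (letter_morph (merge_letter b a)), phi.
split; first exact: letter_morph_morphism.
split; first exact: phi_morph.
split.
  apply: (collision_not_automorphism neq_ab).
  by rewrite /letter_morph merge_letter_collision.
split; first exact: collision_not_automorphism neq_ab phi_ab.
move=> w _.
by rewrite morph_apply_letter_morph (eq_morph_apply (merge_letter_invariant phi_ab)).
Qed.
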